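(* Let $\Delta\ge3$. The problem $\Pi^{\mathsf{orcx}}$ cannot be solved in $0$ rounds in the (deterministic) port-numbering model on $\Delta$-regular graphs, even if a proper $\Delta$-edge coloring with colors $1,\dots,\Delta$ is given as input.
   Context: Node-edge-checkable problems label the half-edges of a $\Delta$-regular graph. The node constraint lists the allowed multisets of the $\Delta$ labels at a node, and the edge constraint lists the allowed multisets of the two labels on an edge. In the port-numbering model each node has a numbering $1,\dots,\Delta$ of its incident edges and no identifiers. A $0$-round algorithm chooses labels for its incident half-edges as a function of its port numbering and the input colors on its incident edges only. $\Pi^{\mathsf{orcx}}$ has labels $\Sigma_1\cup\Sigma_2$ with $\Sigma_1=\{\mathsf O,\mathsf R,\mathsf C,\mathsf X\}$ and $\Sigma_2=\{\mathsf o,\mathsf r,\mathsf c,\mathsf x\}$. Its node configurations are the $L_1\dots L_\Delta$ such that: - exactly one $L_k$ lies in $\Sigma_1$; and - there are distinct $k,k'$ with all other $L_{k''}\in\{\mathsf O,\mathsf o\}$, and either ($L_k\in\{\mathsf X,\mathsf x\}$ and $L_{k'}\in\{\mathsf O,\mathsf o\}$) or ($L_k\in\{\mathsf R,\mathsf r\}$ and $L_{k'}\in\{\mathsf C,\mathsf c\}$). Its edge configurations are all configurations in $[\mathsf O]\,[\mathsf O\mathsf R\mathsf C\mathsf X]$, $[\mathsf O\mathsf R]\,[\mathsf O\mathsf R]$, $[\mathsf O\mathsf C]\,[\mathsf O\mathsf C]$, $[\mathsf o]\,[\mathsf o\mathsf r\mathsf c\mathsf x]$ and $[\mathsf o\mathsf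 r]\,[\mathsf o\mathsf c]$, where $[S]\,[S']$ denotes all pairs with one entry from $S$ and the other from $S'$. *)

From HB Require Import structures.
From mathcomp Require Import all_boot.
Set Implicit Arguments. Unset Strict Implicit. Unset Printing Implicit Defensive.

(* Labels Sigma_1 = {O,R,C,X} (uppercase) and Sigma_2 = {o,r,c,x} (lowercase). *)
Inductive label := LO | LR | LC | LX | Lo | Lr | Lc | Lx.

Definition label_eqb (a b : label) : bool :=
  match a, b with
  | LO, LO | LR, LR | LC, LC | LX, LX | Lo, Lo | Lr, Lr | Lc, Lc | Lx, Lx => true
  | _, _ => false end.
Lemma label_eqP : Equality.axiom label_eqb.
Proof. by case; case; constructor. Qed.
HB.instance Definition _ := hasDecEq.Build label label_eqP.

Definition in_Sigma1 (a : label) : bool := a \in [:: LO; LR; LC; LX].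

Definition node_ok (D : nat) (L : 'I_D -> label) : Prop :=
  (exists! k, in_Sigma1 (L k)) /\
  exists k k', k != k' /\
    (forall k'', k'' != k -> k'' != k' -> L k'' \in [:: LO; Lo]) /\
    ((L k \in [:: LX; Lx] /\ L k' \in [:: LO; Lo]) \/
     (L k \in [:: LR; Lr] /\ L k' \in [:: LC; Lc])).

(* Edge constraint: [O][ORCX], [OR][OR], [OC][OC], [o][orcx], [or][oc],
   each [S][S'] meaning an unordered pair with one entry in S, the other in S'. *)
Definition edge_ok_dir (a b : label) : bool :=
  [|| (a == LO) && (b \in [:: LO; LR; LC; LX]),
      (a \in [:: LO; LR]) && (b \in [:: LO; LR]),
      (a \in [:: LO; LC]) && (b \in [:: LO; LC]),
      (a == Lo) && (b \in [:: Lo; Lr; Lc; Lx]) |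
      (a \in [:: Lo; Lr]) && (b \in [:: Lo; Lc])].
Definition edge_ok (a b : label) : bool := edge_ok_dir a b || edge_ok_dir b a.

(* A finite simple D-regular graph with a port numbering: node v has ports
   0..D-1 (standing for 1..D); adj maps a half-edge (v,i) to the opposite
   half-edge of the same edge. *)
Record pn_graph (D : nat) := PNGraph {
  node : finType;
  adj : node * 'I_D -> node * 'I_D;
  adj_invol : forall h, adj (adj h) = h;
  adj_noloop : forall h, (adj h).1 != h.1;
  adj_simple : forall v i j, i != j -> (adj (v, i)).1 != (adj (v, j)).1
}.

(* A proper D-edge coloring with colors 0..D-1 (standing for 1..D):
   col v i is the color of the edge at port i of v. *)
Definition proper_edge_coloring D (G : pn_graph D) (col : node G -> 'I_D -> 'I_D)
  : Prop :=
  (forall h, col (adj h).1 (adj h).2 = col h.1 h.2) /\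
  (forall v, injective (col v)).

Definition solves_orcx D (G : pn_graph D) (out : node G * 'I_D -> label) : Prop :=
  (forall v, node_ok (fun i => out (v, i))) /\
  (forall h, edge_ok (out h) (out (adj h))).

(* A deterministic 0-round algorithm in the port-numbering model with input
   edge colors: the labels at a node are a function of the colors seen at its
   ports (port i |-> color), returning the label for each port. *)
Definition zero_round_alg (D : nat) := {ffun 'I_D -> 'I_D} -> 'I_D -> label.

Definition run0 D (A : zero_round_alg D) (G : pn_graph D)
  (col : node G -> 'I_D -> 'I_D) : node G * 'I_D -> label :=
  fun h => A [ffun i => col h.1 i] h.2.

(* In the complete bipartite graph K_{D,D}, joined so that every edge goes from
   port i to port i and is coloured i, all nodes see the same input; a 0-round
   algorithm therefore uses one labelling L of the ports everywhere, and the
   edge at port i carries L i on both of its halves.  The only labels that are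
   edge-compatible with themselves are O, R, C and o, which leaves the node
   constraint only the option of an R and a C at the same node: two labels of
   Sigma_1. *)

From mathcomp Require Import all_boot ssralg zmodp.
Import GRing.Theory.

Lemma edge_ok_diag (a : label) : edge_ok a a = (a \in [:: LO; LR; LC; Lo]).
Proof. by case: a. Qed.

Lemma diag_edge_ok_not_node_ok D (L : 'I_D -> label) :
  (forall i, edge_ok (L i) (L i)) -> ~ node_ok L.
Proof.
move=> diag [[k0 [_ uniq_k0]] [k [k' [neq_kk' [_ [[Lk_X _] | [Lk_R Lk'_C]]]]]]].
  by move: (diag k) Lk_X; rewrite edge_ok_diag; case: (L k).
have Lk_in1 : in_Sigma1 (L k).
  by move: (diag k) Lk_R; rewrite edge_ok_diag; case: (L k).
have Lk'_in1 : in_Sigma1 (L k').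
  by move: (diag k') Lk'_C; rewrite edge_ok_diag; case: (L k').
by move: neq_kk'; rewrite -(uniq_k0 _ Lk_in1) -(uniq_k0 _ Lk'_in1) eqxx.
Qed.

Section CompleteBipartite.

Variable n : nat.

Definition kbip_adj (h : (bool * 'I_n.+1) * 'I_n.+1) : (bool * 'I_n.+1) * 'I_n.+1 :=
  ((~~ h.1.1, h.2 - h.1.2), h.2)%R.

Lemma kbip_adj_invol h : kbip_adj (kbip_adj h) = h.
Proof. by case: h => [[b u] i]; rewrite /kbip_adj /= negbK opprB addrC subrK. Qed.

Lemma kbip_adj_noloop h : (kbip_adj h).1 != h.1.
Proof. by case: h => [[[] u] i]. Qed.

Lemma kbip_adj_simple v i j : i != j -> (kbip_adj (v, i)).1 != (kbip_adj (v, j)).1.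
Proof.
rewrite /kbip_adj /= xpair_eqE eqxx /=; apply: contra => /eqP eq_iv_jv.
by apply/eqP; rewrite -(subrK v.2 i) eq_iv_jv subrK.
Qed.

Definition kbip : pn_graph n.+1 :=
  PNGraph kbip_adj_invol kbip_adj_noloop kbip_adj_simple.

Definition port_col (v : node kbip) (i : 'I_n.+1) : 'I_n.+1 := i.

Lemma port_col_proper : proper_edge_coloring port_col.
Proof. by split=> // v i j. Qed.

End CompleteBipartite.

Theorem mainTheorem19 (D : nat) (hD : 3 <= D) (A : zero_round_alg D) :
  exists (G : pn_graph D) (col : node G -> 'I_D -> 'I_D),
    proper_edge_coloring col /\ ~ solves_orcx (run0 A col).
Proof.
case: D hD A => [// | n] _ A.
exists (kbip n), (@port_col n); split; first exact: port_col_proper.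
move=> [node_sol edge_sol].
pose L := A [ffun i => i].
have diag_L : forall i, edge_ok (L i) (L i) by move=> i; exact: edge_sol (true, i, i).
exact: diag_edge_ok_not_node_ok diag_L (node_sol (true, ord0)).
Qed.
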